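(* Let $C=(N,E)$ be a (deterministic) TDD respecting a vtree $T$ over $X$. For every node $t$ of $T$ and all distinct $t$-nodes $g,g'$, the functions $f_g$ and $f_{g'}$ have no common model. As a consequence, every model $\tau$ of $f_C$ has a unique certificate in $C$.
   Context: For a finite set $A$, $2^A$ is the set of assignments $A\to\{0,1\}$; a Boolean function over $X$ is a map $2^X\to\{0,1\}$ with models the assignments mapped to $1$. A vtree over $X$ is a rooted tree in which every internal node has exactly two children (ordered: $t_1$, $t_2$) and whose leaves are labeled bijectively by $X$; $X_t$ denotes the variables labeling leaves below node $t$. An nTDD $C=(N,E)$ respecting $T$: nodes $N=\biguplus_t N_t$ ($t$-nodes) over nodes $t$ of $T$; a $t$-node with $t$ a leaf labeled $x$ has a label in $\{x,\neg x,1,0\}$; $E(g)=\emptyset$ for leaf $t$, and $E(g)\subseteq N_{t_1}\times N_{t_2}$ for internal $t$ with children $t_1,t_2$; a distinguished $r$-node $\mathrm{out}$ ($r$ the root). Semantics: a leaf $t$-node computes the function over $\{x\}$ given by its label (literal or constant); for internal $t$, $\tau\in 2^{X_t}$ is a model of $f_g$ iff some $(g_1,g_2)\in E(g)$ has $\tau|_{X_{t_1}}\models f_{g_1}$ and $\tau|_{X_{t_2}}\models f_{g_2}$; $f_C=f_{\mathrm{out}}$. A TDD is an nTDD such that (i) for every leaf $t$ labeled $x$, $N_t$ has at most one node labeled $x$, at most one labeled $\neg x$, at most one labeled $1$, and if some node is labeled $1$ all other nodes of $N_t$ are labeled $0$; (ii) for every internal $t$ and distinct $g,g'\in N_t$,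 $E(g)\cap E(g')=\emptyset$. A certificate for $\tau\in 2^X$ in $C$ is a choice of one $t$-node $g_t$ per node $t$ of $T$ with $g_r=\mathrm{out}$, each leaf choice labeled $1$ or by a literal true under $\tau$, and $(g_{t_1},g_{t_2})\in E(g_t)$ for each internal $t$ with children $t_1,t_2$. *)

From mathcomp Require Import all_boot.
Set Implicit Arguments. Unset Strict Implicit. Unset Printing Implicit Defensive.

Inductive vtree (X : Type) : Type :=
| VLeaf of X
| VNode of vtree X & vtree X.

Section Vtree.
Variable X : finType.

Fixpoint leaves (t : vtree X) : seq X :=
  match t with VLeaf x => [:: x] | VNode t1 t2 => leaves t1 ++ leaves t2 end.

Definition is_vtree (t : vtree X) : Prop :=
  uniq (leaves t) /\ forall x : X, x \in leaves t.

(* Nodes of a vtree are identified with their positions: the path from the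
   root (false = go to first child t1, true = go to second child t2). *)
Fixpoint subtree (t : vtree X) (p : seq bool) : option (vtree X) :=
  match p with
  | [::] => Some t
  | b :: p' => match t with
               | VLeaf _ => None
               | VNode t1 t2 => subtree (if b then t2 else t1) p'
               end
  end.

Definition is_vnode (t : vtree X) (p : seq bool) : bool := subtree t p.
Definition is_leafpos (t : vtree X) (p : seq bool) : bool :=
  if subtree t p is Some (VLeaf _) then true else false.
Definition is_internalpos (t : vtree X) (p : seq bool) : bool :=
  if subtree t p is Some (VNode _ _) then true else false.
End Vtree.

(* Labels of leaf t-nodes, where t is a leaf labeled x:
   LPos = x, LNeg = ~x, LOne = 1, LZero = 0. *)
Inductive label := LPos | LNeg | LOne | LZero.

(* The raw data of a circuit over a vtree: a finite set of nodes, each with the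
   position of the vtree node it belongs to (so N = disjoint union of the N_t),
   a label (relevant for leaf t-nodes), a set of children pairs E(g), and a
   distinguished output node. *)
Record ntdd_data (X : finType) := NTDD {
  cnode :> finType;
  cpos : cnode -> seq bool;
  clab : cnode -> label;
  cedges : cnode -> {set cnode * cnode};
  cout : cnode
}.

Section Circuit.
Variables (X : finType) (T : vtree X) (C : ntdd_data X).

Definition respects : Prop :=
  [/\ forall g : C, is_vnode T (cpos g),
      cpos (cout C) = [::],
      forall g : C, is_leafpos T (cpos g) -> cedges g = set0 &
      forall g : C, is_internalpos T (cpos g) ->
        forall e, e \in cedges g ->
          cpos e.1 = rcons (cpos g) false /\ cpos e.2 = rcons (cpos g) true].

(* semantics: f_g evaluated on an assignment tau (only the variables X_t of
   the vtree node t of g are read). *)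
Fixpoint evalT (t : vtree X) (g : C) (tau : X -> bool) : bool :=
  match t with
  | VLeaf x => match clab g with
               | LPos => tau x | LNeg => ~~ tau x | LOne => true | LZero => false end
  | VNode t1 t2 => [exists e in cedges g, evalT t1 e.1 tau && evalT t2 e.2 tau]
  end.

Definition sem (g : C) (tau : X -> bool) : bool :=
  if subtree T (cpos g) is Some t then evalT t g tau else false.

Definition fC (tau : X -> bool) : bool := sem (cout C) tau.

Definition is_tdd : Prop :=
  (forall p, is_leafpos T p ->
     (forall l : label, l <> LZero -> forall g g' : C,
         cpos g = p -> cpos g' = p -> clab g = l -> clab g' = l -> g = g') /\
     (forall g : C, cpos g = p -> clab g = LOne ->
         forall g' : C, cpos g' = p -> g' != g -> clab g' = LZero)) /\
  (forall p, is_internalpos T p ->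
     forall g g' : C, cpos g = p -> cpos g' = p -> g != g' ->
       [disjoint cedges g & cedges g']).

(* certificate for tau: a choice c p of a t-node for every node p of T *)
Definition is_certificate (tau : X -> bool) (c : seq bool -> C) : Prop :=
  [/\ c [::] = cout C,
      forall p, is_vnode T p -> cpos (c p) = p,
      forall p, is_leafpos T p ->
        match clab (c p), subtree T p with
        | LOne, _ => true
        | LPos, Some (VLeaf x) => tau x
        | LNeg, Some (VLeaf x) => ~~ tau x
        | _, _ => false
        end &
      forall p, is_internalpos T p ->
        (c (rcons p false), c (rcons p true)) \in cedges (c p)].
End Circuit.

From mathcomp Require Import all_boot.
Set Implicit Arguments. Unset Strict Implicit. Unset Printing Implicit Defensive.

(* Determinism propagates bottom-up along the vtree.  Two distinct t-nodes
   satisfied by the same assignment would, at a leaf, contradict the label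
   conditions; at an internal node they would either share a pair of children
   or yield two distinct satisfied nodes one level below.  Hence, for a model
   tau of f_C, every node of T carries exactly one t-node satisfied by tau
   (existence is propagated top-down from the output).  Choosing it everywhere
   gives a certificate, and every certificate consists of satisfied nodes, so
   it is that one. *)

Section Subtree.
Variable X : finType.
Implicit Types (t : vtree X) (p q : seq bool).

Lemma subtree_nil t : subtree t [::] = Some t.
Proof. by case: t. Qed.

Lemma subtree_cat t p q :
  subtree t (p ++ q) = if subtree t p is Some t' then subtree t' q else None.
Proof. by elim: p t => [|b p IHp] [x|t1 t2] //=. Qed.

Lemma subtree_rcons t p b t1 t2 : subtree t p = Some (VNode t1 t2) ->
  subtree t (rcons p b) = Some (if b then t2 else t1).
Proof. by move=> sp; rewrite -cats1 subtree_cat sp /= subtree_nil. Qed.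

Lemma subtree_vnode t p t' : subtree t p = Some t' -> is_vnode t p.
Proof. by rewrite /is_vnode => ->. Qed.

Lemma is_vnode_rcons t p b : is_vnode t (rcons p b) ->
  exists t1 t2, subtree t p = Some (VNode t1 t2).
Proof.
rewrite /is_vnode -cats1 subtree_cat.
by case: (subtree t p) => [[x|t1 t2]|] // _; exists t1, t2.
Qed.

End Subtree.

Section Determinism.
Variables (X : finType) (T : vtree X) (C : ntdd_data X).
Hypothesis C_respects : respects T C.
Implicit Types (g : C) (tau : X -> bool).

Lemma sem_subtree g t tau :
  subtree T (cpos g) = Some t -> sem T g tau = evalT t g tau.
Proof. by rewrite /sem => ->. Qed.

Lemma cpos_edge g t1 t2 e : subtree T (cpos g) = Some (VNode t1 t2) ->
  e \in cedges g ->
  cpos e.1 = rcons (cpos g) false /\ cpos e.2 = rcons (cpos g) true.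
Proof.
case: C_respects => _ _ _ edge_pos sg; apply: edge_pos.
by rewrite /is_internalpos sg.
Qed.

Lemma sem_node g t1 t2 tau : subtree T (cpos g) = Some (VNode t1 t2) ->
  sem T g tau = [exists e in cedges g, sem T e.1 tau && sem T e.2 tau].
Proof.
move=> sg; rewrite (sem_subtree _ sg) /=; apply: eq_existsb => e.
case ge: (e \in cedges g) => //=; have [e1 e2] := cpos_edge sg ge.
by rewrite /sem e1 e2 !(subtree_rcons _ sg).
Qed.

Hypothesis C_tdd : is_tdd T C.

Lemma sem_leaf_disjoint g g' x tau : subtree T (cpos g) = Some (VLeaf x) ->
  cpos g = cpos g' -> g != g' -> ~~ (sem T g tau && sem T g' tau).
Proof.
move=> sg gg' /eqP neq_gg'.
have sg' : subtree T (cpos g') = Some (VLeaf x) by rewrite -gg'.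
have leaf_g : is_leafpos T (cpos g) by rewrite /is_leafpos sg.
have [same_label one_alone] := C_tdd.1 _ leaf_g.
have label_neq l : l <> LZero -> clab g = l -> clab g' = l -> False.
  by move=> nz lg lg'; apply/neq_gg'/(same_label l nz).
have zero_g' : clab g = LOne -> clab g' = LZero.
  by move/(one_alone g erefl); apply; rewrite // eq_sym; apply/eqP.
have zero_g : clab g' = LOne -> clab g = LZero.
  by move/(one_alone g' (esym gg')); apply; last apply/eqP.
rewrite (sem_subtree _ sg) (sem_subtree _ sg') /=; apply/negP.
case lg: (clab g); case lg': (clab g') => //=; first
  [ by exfalso; apply: (label_neq _ _ lg lg')
  | by move: (zero_g' lg); rewrite lg'
  | by move: (zero_g lg'); rewrite lg
  | by case: (tau x) ].
Qed.

Lemma sem_disjoint g g' tau :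
  cpos g = cpos g' -> g != g' -> ~~ (sem T g tau && sem T g' tau).
Proof.
case sg: (subtree T (cpos g)) => [t|]; last by rewrite /sem sg.
elim: t g g' sg => [x|t1 IH1 t2 IH2] g g' sg gg' neq_gg'.
  exact: sem_leaf_disjoint sg gg' neq_gg'.
have sg' : subtree T (cpos g') = Some (VNode t1 t2) by rewrite -gg'.
rewrite (sem_node _ sg) (sem_node _ sg'); apply/negP.
case/andP=> /existsP [e /and3P [ge s1 s2]] /existsP [e' /and3P [ge' s1' s2']].
have [e1 e2] := cpos_edge sg ge; have [e1' e2'] := cpos_edge sg' ge'.
case: (eqVneq e e') => [eq_ee'|].
  have internal_g : is_internalpos T (cpos g) by rewrite /is_internalpos sg.
  have disj := C_tdd.2 _ internal_g g g' erefl (esym gg') neq_gg'.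
  by rewrite -eq_ee' (disjointFr disj ge) in ge'.
rewrite -pair_eqE /pair_eq negb_and => /orP [neq1|neq2].
- have := IH1 e.1 e'.1; rewrite e1 e1' gg' s1 s1' (subtree_rcons _ sg') /=.
  by move=> /(_ erefl erefl neq1).
- have := IH2 e.2 e'.2; rewrite e2 e2' gg' s2 s2' (subtree_rcons _ sg') /=.
  by move=> /(_ erefl erefl neq2).
Qed.

Variable tau : X -> bool.
Implicit Types c : seq bool -> C.

Lemma certificate_sem c p :
  is_certificate T tau c -> is_vnode T p -> sem T (c p) tau.
Proof.
case=> _ c_pos c_leaf c_edge; rewrite /is_vnode.
have c_sem q t : subtree T q = Some t -> sem T (c q) tau = evalT t (c q) tau.
  by move=> sq; rewrite /sem (c_pos q (subtree_vnode sq)) sq.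
case sp: (subtree T p) => [t|] // _.
elim: t p sp => [x|t1 IH1 t2 IH2] p sp; rewrite (c_sem _ _ sp) /=.
  by have := c_leaf p; rewrite /is_leafpos sp => /(_ isT); case: clab.
apply/existsP; exists (c (rcons p false), c (rcons p true)).
have [sp1 sp2] := (subtree_rcons false sp, subtree_rcons true sp).
rewrite c_edge ?/is_internalpos ?sp //=.
by rewrite -(c_sem _ _ sp1) -(c_sem _ _ sp2) IH1 ?IH2.
Qed.

Lemma certificate_unique c c' p : is_certificate T tau c ->
  is_certificate T tau c' -> is_vnode T p -> c' p = c p.
Proof.
move=> cert_c cert_c' vp; apply/eqP; apply: contraT => neq.
have [_ c_pos _ _] := cert_c; have [_ c'_pos _ _] := cert_c'.
have := sem_disjoint tau (etrans (c'_pos p vp) (esym (c_pos p vp))) neq.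
by rewrite !certificate_sem.
Qed.

Definition model_node p : C :=
  odflt (cout C) [pick g | (cpos g == p) && sem T g tau].

Hypothesis tau_model : fC T C tau.

Lemma exists_model_node p :
  is_vnode T p -> [exists g : C, (cpos g == p) && sem T g tau].
Proof.
elim/last_ind: p => [|p b IHp] vp; apply/existsP.
  by exists (cout C); case: C_respects => _ -> _ _; rewrite eqxx.
have [t1 [t2 sp]] := is_vnode_rcons vp.
have /existsP [g /andP [/eqP gp sg]] := IHp (subtree_vnode sp).
rewrite -gp in sp; move: sg; rewrite (sem_node _ sp).
case/existsP=> e /and3P [ge s1 s2]; have [e1 e2] := cpos_edge sp ge.
by exists (if b then e.2 else e.1); case: b {vp}; rewrite /= ?e1 ?e2 gp eqxx.
Qed.

Lemma model_nodeP p :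
  is_vnode T p -> cpos (model_node p) = p /\ sem T (model_node p) tau.
Proof.
move=> vp; rewrite /model_node; case: pickP => [g /andP [/eqP -> ->] // | none].
by have /existsP [g] := exists_model_node vp; rewrite none.
Qed.

Lemma model_node_eq g : sem T g tau -> model_node (cpos g) = g.
Proof.
move=> sg; have vg : is_vnode T (cpos g).
  by move: sg; rewrite /sem /is_vnode; case: subtree.
have [pos s] := model_nodeP vg; apply/eqP; apply: contraT => neq.
by have := sem_disjoint tau pos neq; rewrite s sg.
Qed.

Lemma model_node_certificate : is_certificate T tau model_node.
Proof.
have [_ out_pos _ _] := C_respects.
split=> [|p|p|p].
- by rewrite -out_pos model_node_eq.
- by case/model_nodeP.
- rewrite /is_leafpos; case sp: (subtree T p) => [[x|//]|//] _.
  have [pos] := model_nodeP (subtree_vnode sp).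
  by rewrite /sem pos sp /=; case: clab.
rewrite /is_internalpos; case sp: (subtree T p) => [[//|t1 t2]|//] _.
have [pos] := model_nodeP (subtree_vnode sp).
set g := model_node p; rewrite -pos in sp *; rewrite (sem_node _ sp).
case/existsP=> e /and3P [ge s1 s2]; have [e1 e2] := cpos_edge sp ge.
by rewrite -e1 -e2 !model_node_eq // -surjective_pairing.
Qed.

End Determinism.

Theorem theorem2 (X : finType) (T : vtree X) (C : ntdd_data X) :
  is_vtree T -> respects T C -> is_tdd T C ->
  (forall g g' : C, cpos g = cpos g' -> g != g' ->
     forall tau : X -> bool, ~~ (sem T g tau && sem T g' tau)) /\
  (forall tau : X -> bool, fC T C tau ->
     exists c : seq bool -> C,
       is_certificate T tau c /\
       forall c' : seq bool -> C, is_certificate T tau c' ->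
         forall p, is_vnode T p -> c' p = c p).
Proof.
move=> _ C_respects C_tdd; split=> [g g' gg' neq_gg' tau | tau tau_model].
  exact: sem_disjoint.
have cert := model_node_certificate C_respects C_tdd tau_model.
exists (model_node T C tau); split=> // c' cert' p vp.
exact: certificate_unique cert cert' vp.
Qed.
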